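(* Let $d\ge2$, let $a$ be an i.i.d. conductivity function on $\mathbb{Z}^d$, $\xi\in\mathbb{R}^d$ with $|\xi|=1$, and let $\phi_T$ be the associated approximate corrector, $T>0$. Then for all $n\in2\mathbb{N}$, \[ \big\langle|\phi_T(0)|^n\big(|\nabla\phi_T(0)|^2+|\nabla^*\phi_T(0)|^2\big)\big\rangle\lesssim\langle|\phi_T(0)|^n\rangle, \] where the multiplicative constant depends on $n$, $\alpha$, $\beta$, $d$, but not on $T>0$.
   Context: A conductivity function on $\mathbb{Z}^d$ is $a:\mathbb{Z}^d\times\mathbb{Z}^d\to\mathbb{R}^+$ with $a(x,y)=0$ if $|x-y|\ne1$ and $a(x,y)=a(y,x)\in[\alpha,\beta]$ if $|x-y|=1$, $0<\alpha\le\beta$; i.i.d. means its edge values are independent identically distributed random variables; $\langle\cdot\rangle$ is expectation. With $e_1,\dots,e_d$ the canonical basis: $\nabla u(x)=(u(x+e_i)-u(x))_i$, $\nabla^*u(x)=(u(x)-u(x-e_i))_i$, $\nabla^*\cdot g=\sum_i\nabla_i^*g_i$, $A(x)=\operatorname{diag}(a(x,x+e_1),\dots,a(x,x+e_d))$. The approximate corrector $\phi_T$ is the unique stationary random function with $T^{-1}\phi_T-\nabla^*\cdot A(\nabla\phi_T+\xi)=0$ in $\mathbb{Z}^d$ and $\langle\phi_T\rangle=0$. $X\lesssim Y$ means $X\le CY$ with a constant $C$. *)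

From HB Require Import structures.
From mathcomp Require Import all_boot all_order all_algebra.
From mathcomp Require Import all_classical all_reals all_analysis.
Set Implicit Arguments. Unset Strict Implicit. Unset Printing Implicit Defensive.
Import Order.TTheory GRing.Theory Num.Theory.
Local Open Scope classical_set_scope.
Local Open Scope ring_scope.

Notation Zd d := 'rV[int]_d.

Definition ebase (d : nat) (i : 'I_d) : Zd d := delta_mx 0 i.

Definition nbr (d : nat) (x y : Zd d) : bool :=
  (\sum_(i < d) ((x - y) 0 i) ^+ 2 == 1)%R.

Section Defs.
Variable R : realType.

Definition conductivity (d : nat) (alpha beta : R) (a : Zd d -> Zd d -> R) : Prop :=
  forall x y : Zd d,
    (~~ nbr x y -> a x y = 0) /\
    (nbr x y -> a x y = a y x /\ alpha <= a x y <= beta).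

Definition grad (d : nat) (u : Zd d -> R) (x : Zd d) (i : 'I_d) : R :=
  u (x + ebase i) - u x.
Definition grad_star (d : nat) (u : Zd d -> R) (x : Zd d) (i : 'I_d) : R :=
  u x - u (x - ebase i).
Definition div_star (d : nat) (g : Zd d -> 'I_d -> R) (x : Zd d) : R :=
  \sum_(i < d) (g x i - g (x - ebase i) i).
(* A(x) = diag(a(x, x+e_1), ..., a(x, x+e_d)) *)
Definition Acoef (d : nat) (a : Zd d -> Zd d -> R) (x : Zd d) (i : 'I_d) : R :=
  a x (x + ebase i).

Definition corrector_eq (d : nat) (a : Zd d -> Zd d -> R) (xi : 'rV[R]_d) (T : R)
  (u : Zd d -> R) : Prop :=
  forall x : Zd d,
    T^-1 * u x
    - div_star (fun y i => Acoef a y i * (grad u y i + xi 0 i)) x = 0.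

Definition sqnorm_grad (d : nat) (u : Zd d -> R) (x : Zd d) : R :=
  \sum_(i < d) (grad u x i) ^+ 2.
Definition sqnorm_grad_star (d : nat) (u : Zd d -> R) (x : Zd d) : R :=
  \sum_(i < d) (grad_star u x i) ^+ 2.

(* The random conductivity field a : Omega -> (Z^d x Z^d -> R) is i.i.d.:
   its edge values a(x, x+e_i) (each undirected edge of Z^d is listed exactly
   once as (x, i)) are measurable, mutually independent (product rule for every
   finite family of distinct edges) and identically distributed. *)
Definition iid_conductivity (dsp : measure_display) (Omega : measurableType dsp)
  (P : probability Omega R) (d : nat) (a : Omega -> Zd d -> Zd d -> R) : Prop :=
  let X := fun (e : Zd d * 'I_d) (w : Omega) => a w e.1 (e.1 + ebase e.2) in
  (forall e, measurable_fun setT (X e)) /\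
  (forall (s : seq (Zd d * 'I_d)) (B : Zd d * 'I_d -> set R),
      uniq s -> (forall e, measurable (B e)) ->
      fine (P (\big[setI/setT]_(e <- s) (X e @^-1` B e)))
      = \prod_(e <- s) fine (P (X e @^-1` B e))) /\
  (forall (e e' : Zd d * 'I_d) (B : set R), measurable B ->
      P (X e @^-1` B) = P (X e' @^-1` B)).

(* phi is a stationary random function (jointly with a): there is a
   measure-preserving action of the shifts of Z^d on Omega that is
   covariant for both a and phi. *)
Definition stationary (dsp : measure_display) (Omega : measurableType dsp)
  (P : probability Omega R) (d : nat) (a : Omega -> Zd d -> Zd d -> R)
  (phi : Omega -> Zd d -> R) : Prop :=
  exists tau : Zd d -> Omega -> Omega,
    (forall z, measurable_fun setT (tau z)) /\
    (forall z (A : set Omega), measurable A -> P (tau z @^-1` A) = P A) /\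
    (forall z w x y, a (tau z w) x y = a w (x + z) (y + z)) /\
    (forall z w x, phi (tau z w) x = phi w (x + z)).

Definition approx_corrector (dsp : measure_display) (Omega : measurableType dsp)
  (P : probability Omega R) (d : nat) (a : Omega -> Zd d -> Zd d -> R)
  (xi : 'rV[R]_d) (T : R) (phi : Omega -> Zd d -> R) : Prop :=
  (forall x, measurable_fun setT (fun w => phi w x)) /\
  stationary P a phi /\
  (forall w, corrector_eq (a w) xi T (phi w)) /\
  P.-integrable setT (fun w => (phi w 0)%:E) /\
  (\int[P]_w (phi w 0)%:E = 0)%E.

End Defs.

From mathcomp Require Import all_boot all_order all_algebra.
From mathcomp Require Import all_classical all_reals all_analysis.
From mathcomp Require Import measurable_realfun lebesgue_integral.
From mathcomp Require Import ring lra.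
Set Implicit Arguments.
Unset Strict Implicit.
Unset Printing Implicit Defensive.
Import Order.TTheory GRing.Theory Num.Theory.
Local Open Scope ring_scope.

(* Truncate phi_T at level M and test the corrector equation at the origin with
   psi_M(phi_T(0)), where psi_M(t) = clamp_M(t)^(n+1); the truncation makes every
   tested quantity integrable.  The massive term T^-1 phi_T psi_M(phi_T) is
   nonnegative, and by stationarity the tested divergence term has the same
   expectation as
     - sum_i (psi_M(phi_T(e_i)) - psi_M(phi_T(0))) a(0, e_i) (nabla_i phi_T(0) + xi_i).
   For even n, the elementary inequality
     (u^n + v^n) (v - u)^2 <= 2 (v^(n+1) - u^(n+1)) (v - u),
   ellipticity, and Young's inequality for the xi-term bound the expectation of
   the truncated energy sum_i (u^n + v^n) (v - u)^2, with u, v the truncations of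
   phi_T(0), phi_T(e_i), by 4 d (n+1) beta / alpha <|phi_T(0)|^n>.  Monotone
   convergence removes the truncation, and stationarity identifies the limit
   energy with <|phi_T(0)|^n (|nabla phi_T(0)|^2 + |nabla^* phi_T(0)|^2)>. *)

Section truncation.
Variable R : realFieldType.
Implicit Types (M x y : R).

Definition clamp M x : R := Num.max (- M) (Num.min x M).

Lemma clampE M x : 0 <= M ->
  clamp M x = if x < - M then - M else if M < x then M else x.
Proof.
move=> M0; rewrite /clamp; case: ifPn => xM.
  by rewrite (min_idPl _) ?(max_idPl _) //; lra.
case: ifPn => Mx.
  by rewrite (min_idPr _) ?(max_idPr _) //; lra.
by rewrite (min_idPl _) ?(max_idPr _) //; lra.
Qed.

Local Ltac clamp_cases :=
  rewrite ?clampE //; repeat (case: ifPn => [?|]; last rewrite -leNgt => ?).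

Lemma norm_clamp_le_bound M x : 0 <= M -> `|clamp M x| <= M.
Proof. by move=> M0; clamp_cases; rewrite ler_norml; lra. Qed.

Lemma norm_clamp_le_norm M x : 0 <= M -> `|clamp M x| <= `|x|.
Proof.
have := ler_norm x; have := ler_norm (- x); rewrite normrN.
by move=> Nx xN M0; rewrite ler_norml; clamp_cases; lra.
Qed.

Lemma clamp_id M x : `|x| <= M -> clamp M x = x.
Proof.
move=> xM; have M0 : 0 <= M by apply: le_trans xM.
by move: xM; rewrite ler_norml => /andP[? ?]; clamp_cases; lra.
Qed.

Lemma clamp_clamp M M' x : 0 <= M -> M <= M' -> clamp M (clamp M' x) = clamp M x.
Proof.
move=> M0 MM'; rewrite [clamp M' x](clampE x (le_trans M0 MM')).
by repeat (case: ifPn => [?|]; last rewrite -leNgt => ?); clamp_cases; lra.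
Qed.

Lemma mulr_clamp_ge0 M x : 0 <= M -> 0 <= x * clamp M x.
Proof. by move=> M0; clamp_cases; nra. Qed.

(* [clamp M] is the projection onto [[-M, M]], hence firmly non-expansive. *)
Lemma sqr_clampB_le M x y : 0 <= M ->
  (clamp M y - clamp M x) ^+ 2 <= (clamp M y - clamp M x) * (y - x).
Proof. by move=> M0; rewrite expr2; clamp_cases; nra. Qed.

Lemma norm_clampB_le M x y : 0 <= M -> `|clamp M y - clamp M x| <= `|y - x|.
Proof.
move=> M0; rewrite -ler_sqr ?nnegrE ?normr_ge0 // !real_normK ?num_real //.
have := sqr_clampB_le x y M0; have := sqr_ge0 ((y - x) - (clamp M y - clamp M x)).
by rewrite !expr2; nra.
Qed.

End truncation.

Section power_inequalities.
Variable R : realFieldType.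
Implicit Types (p q u v x y z : R).

Lemma expr_even_norm n x : ~~ odd n -> `|x| ^+ n = x ^+ n.
Proof. by move=> ne; rewrite -normrX ger0_norm // exprn_even_ge0. Qed.

Lemma ler_expr_even n x y : ~~ odd n -> `|x| <= `|y| -> x ^+ n <= y ^+ n.
Proof.
move=> ne xy; rewrite -(expr_even_norm x ne) -(expr_even_norm y ne).
by rewrite lerXn2r // nnegrE normr_ge0.
Qed.

Lemma sum_expr_sqrB_le n u v : ~~ odd n ->
  (u ^+ n + v ^+ n) * (v - u) ^+ 2 <= 2 * ((v ^+ n.+1 - u ^+ n.+1) * (v - u)).
Proof.
move=> ne; rewrite -subr_ge0.
have -> : 2 * ((v ^+ n.+1 - u ^+ n.+1) * (v - u)) - (u ^+ n + v ^+ n) * (v - u) ^+ 2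
    = (v ^+ 2 - u ^+ 2) * (v ^+ n - u ^+ n) by rewrite !exprS; ring.
have [uv|vu] := lerP `|u| `|v|.
  by apply: mulr_ge0; rewrite subr_ge0 ler_expr_even.
by apply: mulr_le0; rewrite subr_le0 ler_expr_even // ltW.
Qed.

Lemma expr_mix_le_add i j x y : 0 <= x -> 0 <= y -> (i <= j)%N ->
  x ^+ (j - i) * y ^+ i <= x ^+ j + y ^+ j.
Proof.
move=> x0 y0 ij; have [xy|yx] := lerP x y.
  apply: le_trans (_ : y ^+ j <= _); last by rewrite lerDr exprn_ge0.
  by rewrite -{2}(subnK ij) exprD ler_wpM2r ?exprn_ge0 // lerXn2r.
apply: le_trans (_ : x ^+ j <= _); last by rewrite lerDl exprn_ge0.
by rewrite -{2}(subnK ij) exprD ler_wpM2l ?exprn_ge0 // lerXn2r // ?nnegrE // ltW.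
Qed.

Lemma norm_subrX_le n u v :
  `|v ^+ n.+1 - u ^+ n.+1| <= n.+1%:R * (`|u| ^+ n + `|v| ^+ n) * `|v - u|.
Proof.
rewrite subrXX normrM mulrC ler_wpM2r ?normr_ge0 //.
apply: le_trans (ler_norm_sum _ _ _) _.
apply: le_trans (_ : \sum_(i < n.+1) (`|u| ^+ n + `|v| ^+ n) <= _); last first.
  by rewrite sumr_const card_ord mulr_natl.
apply: ler_sum => i _; rewrite normrM !normrX addrC.
by apply: expr_mix_le_add; rewrite // -ltnS.
Qed.

Lemma mulr2_le_add x y z : 0 <= y -> 0 <= z -> x ^+ 2 <= y * z -> 2 * x <= y + z.
Proof. by move=> y0 z0; have := sqr_ge0 (y - z); rewrite !expr2 => ? ?; nra. Qed.

Lemma absorb_perturbation p q L X : 0 <= q -> 0 <= L -> p ^+ 2 <= L * q ->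
  `|X| <= 1 -> q <= 2 * (q + p * X) + L.
Proof.
move=> q0 L0 pLq X1.
have young : 2 * `|p| <= q + L.
  by apply: mulr2_le_add => //; rewrite real_normK ?num_real // mulrC.
have : `|p * X| <= `|p| by rewrite normrM ler_piMr ?normr_ge0.
by rewrite ler_norml => /andP[pX _]; lra.
Qed.

Lemma ler_mul_of_sqr_le p c l : 0 <= p * c -> c ^+ 2 <= c * l ->
  (c = 0 -> p = 0) -> p * c <= p * l.
Proof.
move=> pc cl cp; have [c0|c0] := eqVneq c 0; first by rewrite cp // c0 !mul0r.
suff : 0 <= p * (l - c) * c ^+ 2.
  by rewrite pmulr_lge0 ?exprn_even_gt0 ?c0 ?orbT // mulrBr subr_ge0.
have -> : p * (l - c) * c ^+ 2 = (p * c) * (c * l - c ^+ 2) by ring.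
by rewrite mulr_ge0 // subr_ge0.
Qed.

End power_inequalities.

Section truncated_energy.
Variables (R : realFieldType) (n : nat).
Hypothesis n_even : ~~ odd n.
Implicit Types (M a b : R).

Definition trunc_energy M a b : R :=
  (clamp M a ^+ n + clamp M b ^+ n) * (clamp M b - clamp M a) ^+ 2.

Lemma trunc_energy_ge0 M a b : 0 <= trunc_energy M a b.
Proof. by rewrite mulr_ge0 ?sqr_ge0 // addr_ge0 // exprn_even_ge0. Qed.

Lemma le_trunc_energy M M' a b : 0 <= M -> M <= M' ->
  trunc_energy M a b <= trunc_energy M' a b.
Proof.
move=> M0 MM'; rewrite /trunc_energy -(clamp_clamp a M0 MM') -(clamp_clamp b M0 MM').
move: (clamp M' a) (clamp M' b) => x y.
have le_pow z : clamp M z ^+ n <= z ^+ n.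
  by rewrite ler_expr_even // norm_clamp_le_norm.
rewrite ler_pM ?sqr_ge0 ?lerD ?le_pow ?addr_ge0 ?exprn_even_ge0 //.
rewrite -(real_normK (num_real (clamp M y - clamp M x))) -(real_normK (num_real (y - x))).
by rewrite lerXn2r ?nnegrE ?normr_ge0 ?norm_clampB_le.
Qed.

Lemma trunc_energy_id M a b : `|a| <= M -> `|b| <= M ->
  trunc_energy M a b = (a ^+ n + b ^+ n) * (b - a) ^+ 2.
Proof. by move=> aM bM; rewrite /trunc_energy !clamp_id. Qed.

Section increment.
Variables (M a b : R).
Hypothesis M_ge0 : 0 <= M.
Let u := clamp M a.
Let v := clamp M b.
Let dp := v ^+ n.+1 - u ^+ n.+1.
Let L := n.+1%:R * (`|a| ^+ n + `|b| ^+ n).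

Lemma trunc_energy_le_increment : trunc_energy M a b <= 2 * (dp * (v - u)).
Proof. exact: sum_expr_sqrB_le. Qed.

Lemma increment_ge0 : 0 <= dp * (v - u).
Proof. by have := trunc_energy_ge0 M a b; have := trunc_energy_le_increment; lra. Qed.

Lemma increment_le : dp * (v - u) <= dp * (b - a).
Proof.
apply: ler_mul_of_sqr_le; [exact: increment_ge0|exact: sqr_clampB_le|].
by move/eqP; rewrite subr_eq0 /dp => /eqP ->; rewrite subrr.
Qed.

Lemma sqr_increment_le : dp ^+ 2 <= L * (dp * (b - a)).
Proof.
have Ldp : `|dp| <= L * `|v - u|.
  apply: le_trans (norm_subrX_le _ _ _) _.
  rewrite ler_wpM2r ?normr_ge0 // ler_wpM2l // lerD //.
    by rewrite lerXn2r ?nnegrE ?normr_ge0 ?norm_clamp_le_norm.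
  by rewrite lerXn2r ?nnegrE ?normr_ge0 ?norm_clamp_le_norm.
apply: le_trans (_ : L * (dp * (v - u)) <= _); last first.
  by rewrite ler_wpM2l ?increment_le // mulr_ge0 // addr_ge0 ?exprn_ge0.
rewrite -[dp ^+ 2]real_normK ?num_real // expr2 -(ger0_norm increment_ge0) normrM.
by rewrite mulrCA ler_wpM2l ?normr_ge0.
Qed.

Lemma trunc_energy_le alpha beta A X : 0 <= alpha -> alpha <= A <= beta ->
  `|X| <= 1 -> alpha * trunc_energy M a b <= 4 * (dp * (A * (b - a + X))) + 2 * beta * L.
Proof.
move=> al0 /andP[alA Abe] X1.
have L0 : 0 <= L by rewrite mulr_ge0 // addr_ge0 ?exprn_ge0.
have q0 : 0 <= dp * (b - a) by apply: le_trans increment_ge0 increment_le.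
have absorb := absorb_perturbation q0 L0 sqr_increment_le X1.
have le_increment : alpha * trunc_energy M a b <= alpha * (2 * (dp * (v - u))).
  by rewrite ler_wpM2l ?trunc_energy_le_increment.
have le_ellipticity : alpha * (dp * (v - u)) <= A * (dp * (b - a)).
  by rewrite ler_pM ?increment_ge0 ?increment_le.
have le_absorb : A * (dp * (b - a)) <= A * (2 * (dp * (b - a) + dp * X) + L).
  by rewrite ler_wpM2l // (le_trans al0).
have le_beta : A * L <= beta * L by rewrite ler_wpM2r.
have -> : dp * (A * (b - a + X)) = A * (dp * (b - a) + dp * X) by ring.
lra.
Qed.

End increment.
End truncated_energy.

Local Open Scope classical_set_scope.

Section measure_preserving.
Context (R : realType) (dsp : measure_display) (Omega : measurableType dsp)
  (P : probability Omega R) (t : Omega -> Omega).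
Hypotheses (t_measurable : measurable_fun setT t)
  (t_preserving : forall A, measurable A -> P (t @^-1` A) = P A).
Local Open Scope ereal_scope.

Lemma ge0_integral_preserving (f : Omega -> \bar R) : measurable_fun setT f ->
  (forall x, 0 <= f x) -> \int[P]_x f (t x) = \int[P]_x f x.
Proof.
move=> mf f0.
have := ge0_integral_pushforward t_measurable P measurableT mf (fun y _ => f0 y).
rewrite preimage_setT => <-; apply: eq_measure_integral => A mA _ /=.
by rewrite /pushforward t_preserving.
Qed.

Lemma integral_preserving (f : Omega -> \bar R) : measurable_fun setT f ->
  \int[P]_x f (t x) = \int[P]_x f x.
Proof.
move=> mf; rewrite integralE [RHS]integralE; congr (_ - _).
  have := ge0_integral_preserving (measurable_funepos mf) (funepos_ge0 f).
  by rewrite -/(_ \o _) -funepos_comp.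
have := ge0_integral_preserving (measurable_funeneg mf) (funeneg_ge0 f).
by rewrite -/(_ \o _) -funeneg_comp.
Qed.

Lemma integrable_preserving (f : Omega -> \bar R) :
  P.-integrable setT f -> P.-integrable setT (f \o t).
Proof.
move=> /integrableP[mf fi]; apply/integrableP; split; first exact: measurableT_comp.
by rewrite (@ge0_integral_preserving (fun x => `|f x|)) //; exact: measurableT_comp.
Qed.

End measure_preserving.

Section real_integrals.
Context {R : realType} {dT : measure_display} {Tm : measurableType dT}
  (mu : {measure set Tm -> \bar R}).
Implicit Types f g : Tm -> R.
Local Notation integrable f := (mu.-integrable setT (fun w => (f w)%:E)).

Lemma integrable_finD f g : integrable f -> integrable g -> integrable (f \+ g).
Proof. by move=> fi gi; have := integrableD measurableT fi gi. Qed.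

Lemma integrable_finB f g : integrable f -> integrable g -> integrable (f \- g).
Proof. by move=> fi gi; have := integrableB measurableT fi gi. Qed.

Lemma integrable_finZ (c : R) f : integrable f -> integrable (fun w => c * f w).
Proof. by move=> fi; have := integrableZl measurableT c fi. Qed.

Lemma integrable_fin_norm f : integrable f -> integrable (fun w => `|f w|).
Proof. by move=> fi; have := integrable_norm fi. Qed.

Lemma integrable_fin_sum (I : eqType) (s : seq I) (f : I -> Tm -> R) :
  (forall i, integrable (f i)) -> integrable (fun w => \sum_(i <- s) f i w).
Proof.
move=> fi; have := @integrable_sum _ _ _ mu setT measurableT I s xpredT
  (fun i w => (f i w)%:E) (fun i _ => fi i).
by apply: eq_integrable => // w _; rewrite sumEFin.
Qed.

Lemma le_integrable_fin f g : measurable_fun setT f ->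
  (forall w, `|f w| <= `|g w|) -> integrable g -> integrable f.
Proof.
move=> mf fg; apply: le_integrable => //; first exact/measurable_EFinP.
by move=> w _ /=; rewrite lee_fin.
Qed.

Local Open Scope ereal_scope.

Lemma integral_finD f g : integrable f -> integrable g ->
  \int[mu]_w (f w + g w)%:E = \int[mu]_w (f w)%:E + \int[mu]_w (g w)%:E.
Proof. by move=> fi gi; rewrite -integralD. Qed.

Lemma integral_finB f g : integrable f -> integrable g ->
  \int[mu]_w (f w - g w)%:E = \int[mu]_w (f w)%:E - \int[mu]_w (g w)%:E.
Proof. by move=> fi gi; rewrite -integralB. Qed.

Lemma integral_finZ (c : R) f : integrable f ->
  \int[mu]_w (c * f w)%:E = c%:E * \int[mu]_w (f w)%:E.
Proof. by move=> fi; rewrite -integralZl. Qed.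

Lemma integral_fin_sum (I : eqType) (s : seq I) (f : I -> Tm -> R) :
  (forall i, integrable (f i)) ->
  \int[mu]_w (\sum_(i <- s) f i w)%:E = \sum_(i <- s) \int[mu]_w (f i w)%:E.
Proof.
move=> fi; rewrite -(integral_sum measurableT (f := fun i w => (f i w)%:E)) //.
by apply: eq_integral => w _; rewrite sumEFin.
Qed.

Lemma ge0_integral_finD f g : measurable_fun setT f -> measurable_fun setT g ->
  (forall w, (0 <= f w)%R) -> (forall w, (0 <= g w)%R) ->
  \int[mu]_w (f w + g w)%:E = \int[mu]_w (f w)%:E + \int[mu]_w (g w)%:E.
Proof.
move=> mf mg f0 g0; rewrite -ge0_integralD //.
- by move=> w _; rewrite lee_fin.
- exact/measurable_EFinP.
- by move=> w _; rewrite lee_fin.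
- exact/measurable_EFinP.
Qed.

Lemma ge0_integral_fin_sum (I : eqType) (s : seq I) (f : I -> Tm -> R) :
  (forall i, measurable_fun setT (f i)) -> (forall i w, (0 <= f i w)%R) ->
  \int[mu]_w (\sum_(i <- s) f i w)%:E = \sum_(i <- s) \int[mu]_w (f i w)%:E.
Proof.
move=> mf f0.
rewrite -(@ge0_integral_sum _ _ _ mu setT measurableT I (fun i w => (f i w)%:E)).
- by apply: eq_integral => w _; rewrite sumEFin.
- by move=> i; exact/measurable_EFinP.
- by move=> i w _; rewrite lee_fin.
Qed.

End real_integrals.

Lemma nbr0_ebase d (i : 'I_d) : nbr (0 : Zd d) (0 + ebase i).
Proof.
rewrite /nbr add0r (bigD1 i) //= big1 => [|j ji].
  by rewrite /ebase !mxE /= eqxx add0r sqrrN expr1n addr0.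
by rewrite /ebase !mxE /= (negPf ji) add0r oppr0 expr0n.
Qed.

Lemma conductivity_ebase (R : realType) d (alpha beta : R) (a : Zd d -> Zd d -> R)
  (i : 'I_d) : conductivity alpha beta a -> alpha <= a 0 (0 + ebase i) <= beta.
Proof. by move=> /(_ 0 (0 + ebase i)) [_ /(_ (nbr0_ebase i)) []]. Qed.

Lemma norm_coord_le1 (R : realFieldType) d (xi : 'rV[R]_d) (i : 'I_d) :
  \sum_(j < d) (xi 0 j) ^+ 2 = 1 -> `|xi 0 i| <= 1.
Proof.
move=> xi1; rewrite -(expr_le1 (n := 2)) ?normr_ge0 // real_normK ?num_real //.
by rewrite -xi1 (bigD1 i) //= lerDl sumr_ge0 // => j _; rewrite sqr_ge0.
Qed.

Definition moment_const (R : realFieldType) (d n : nat) (alpha beta : R) : R :=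
  4 * d%:R * n.+1%:R * beta / alpha.

Lemma moment_const_gt0 (R : realFieldType) (d n : nat) (alpha beta : R) :
  (0 < d)%N -> 0 < alpha -> alpha <= beta -> 0 < moment_const d n alpha beta.
Proof.
move=> d0 al0 albe.
by rewrite /moment_const !mulr_gt0 ?invr_gt0 ?ltr0n // (lt_le_trans al0).
Qed.

Section corrector_moment.
Variables (R : realType) (d n : nat) (alpha beta : R).
Hypotheses (n_even : ~~ odd n) (alpha_gt0 : 0 < alpha).
Variables (dsp : measure_display) (Omega : measurableType dsp) (P : probability Omega R)
  (a : Omega -> Zd d -> Zd d -> R) (xi : 'rV[R]_d) (T : R) (phi : Omega -> Zd d -> R)
  (tau : Zd d -> Omega -> Omega).
Hypotheses
  (coef_bounds : forall w i, alpha <= a w 0 (0 + ebase i) <= beta)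
  (coef_measurable : forall i, measurable_fun setT (fun w => a w 0 (0 + ebase i)))
  (xi_bounds : forall i, `|xi 0 i| <= 1)
  (T_gt0 : 0 < T)
  (phi_measurable : forall x, measurable_fun setT (fun w => phi w x))
  (tau_measurable : forall z, measurable_fun setT (tau z))
  (tau_preserving : forall z A, measurable A -> P (tau z @^-1` A) = P A)
  (a_tau : forall z w x y, a (tau z w) x y = a w (x + z) (y + z))
  (phi_tau : forall z w x, phi (tau z w) x = phi w (x + z))
  (phi_eq : forall w, corrector_eq (a w) xi T (phi w))
  (phi0_integrable : P.-integrable setT (fun w => (phi w 0)%:E)).

Definition phi0 w := phi w 0.
Definition phie i w := phi w (0 + ebase i).
Definition coef i w := a w 0 (0 + ebase i).
Definition flux i w := coef i w * (phie i w - phi0 w + xi 0 i).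
Definition back (i : 'I_d) := tau (- ebase i).
Definition tpow M x : R := clamp M x ^+ n.+1.
Definition tested_flux M i w := tpow M (phie i w) * flux i w.
Definition flux_defect M w := \sum_(i < d) (tested_flux M i w - tested_flux M i (back i w)).
Definition energy M w := \sum_(i < d) trunc_energy n M (phi0 w) (phie i w).
Definition full_energy w :=
  \sum_(i < d) (phi0 w ^+ n + phie i w ^+ n) * (phie i w - phi0 w) ^+ 2.
Definition moment_sum w := \sum_(i < d) n.+1%:R * (`|phi0 w| ^+ n + `|phie i w| ^+ n).

Lemma phie_tau i w : phie i w = phi0 (tau (ebase i) w).
Proof. by rewrite /phie /phi0 phi_tau add0r. Qed.

Lemma phie_back i w : phie i (back i w) = phi0 w.
Proof. by rewrite /phie /back /phi0 phi_tau addrK. Qed.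

Lemma flux_back i w : flux i (back i w) =
  Acoef (a w) (0 - ebase i) i * (grad (phi w) (0 - ebase i) i + xi 0 i).
Proof.
rewrite /flux /coef /phie /phi0 /back a_tau !phi_tau /Acoef /grad.
by rewrite addrK subrK.
Qed.

Lemma corrector_eq0 w : T^-1 * phi0 w = \sum_(i < d) (flux i w - flux i (back i w)).
Proof.
have /eqP := phi_eq w 0; rewrite subr_eq0 => /eqP ->.
by apply: eq_bigr => i _; rewrite flux_back.
Qed.

(* Testing the equation with [tpow M (phi0 w)]: the massive term has a sign. *)
Lemma tested_equation_le M w : 0 <= M ->
  \sum_(i < d) (tpow M (phie i w) - tpow M (phi0 w)) * flux i w <= flux_defect M w.
Proof.
move=> M0; have -> : \sum_(i < d) (tpow M (phie i w) - tpow M (phi0 w)) * flux i w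
    = flux_defect M w - tpow M (phi0 w) * (T^-1 * phi0 w).
  rewrite corrector_eq0 mulr_sumr -sumrB; apply: eq_bigr => i _.
  by rewrite /tested_flux phie_back; ring.
have tested_ge0 : 0 <= phi0 w * tpow M (phi0 w).
  by rewrite /tpow exprS mulrA mulr_ge0 ?mulr_clamp_ge0 ?exprn_even_ge0.
by rewrite lerBlDr lerDl mulrCA mulr_ge0 ?invr_ge0 ?(ltW T_gt0) // mulrC.
Qed.

Lemma energy_le M w : 0 <= M ->
  alpha * energy M w <= 4 * flux_defect M w + 2 * beta * moment_sum w.
Proof.
move=> M0; rewrite /energy /moment_sum mulr_sumr.
apply: le_trans (_ : \sum_(i < d) (4 * ((tpow M (phie i w) - tpow M (phi0 w)) * flux i w)
    + 2 * beta * (n.+1%:R * (`|phi0 w| ^+ n + `|phie i w| ^+ n))) <= _).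
  apply: ler_sum => i _.
  exact: (trunc_energy_le n_even _ _ M0 (ltW alpha_gt0) (coef_bounds w i) (xi_bounds i)).
rewrite big_split /= -!mulr_sumr lerD2r ler_wpM2l //.
exact: tested_equation_le.
Qed.


Lemma measurable_clamp M (f : Omega -> R) : measurable_fun setT f ->
  measurable_fun setT (fun w => clamp M (f w)).
Proof.
move=> mf; apply: measurable_maxr; first exact: measurable_cst.
by apply: measurable_minr => //; exact: measurable_cst.
Qed.

Lemma measurable_norm (f : Omega -> R) : measurable_fun setT f ->
  measurable_fun setT (fun w => `|f w|).
Proof. by move=> mf; apply: measurableT_comp => //; exact: normr_measurable. Qed.

Local Ltac measurability := repeat first
  [ apply: measurable_funX | apply: measurable_funD | apply: measurable_funB
  | apply: measurable_funN | apply: measurable_funM | apply: measurable_clamp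
  | apply: measurable_norm | apply: measurable_sum => ? | apply: measurable_cst
  | apply: phi_measurable | apply: coef_measurable ].

Lemma measurable_tested_flux M i : measurable_fun setT (tested_flux M i).
Proof. by rewrite /tested_flux /tpow /flux; measurability. Qed.

Lemma measurable_flux_defect M : measurable_fun setT (flux_defect M).
Proof.
apply: measurable_sum => i; apply: measurable_funB; first exact: measurable_tested_flux.
by apply: measurableT_comp; [exact: measurable_tested_flux|exact: tau_measurable].
Qed.

Lemma measurable_energy M : measurable_fun setT (energy M).
Proof. by rewrite /energy /trunc_energy; measurability. Qed.

Lemma measurable_moment_sum : measurable_fun setT moment_sum.
Proof. by rewrite /moment_sum; measurability. Qed.

Lemma integral_tau z (f : Omega -> \bar R) : measurable_fun setT f ->
  (\int[P]_w f (tau z w) = \int[P]_w f w)%E.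
Proof. exact: (integral_preserving (tau_measurable z) (tau_preserving z)). Qed.

Lemma integrable_tau z (f : Omega -> R) :
  P.-integrable setT (fun w => (f w)%:E) ->
  P.-integrable setT (fun w => (f (tau z w))%:E).
Proof. exact: (integrable_preserving (tau_measurable z) (tau_preserving z)). Qed.

Lemma integrable_tested_flux M i : 0 <= M ->
  P.-integrable setT (fun w => (tested_flux M i w)%:E).
Proof.
move=> M0; apply: (@le_integrable_fin _ _ _ _ _
  (fun w => M ^+ n.+1 * beta * (`|phie i w| + `|phi0 w| + 1))).
- exact: measurable_tested_flux.
- move=> w; have /andP[al be] := coef_bounds w i.
  have coef_ge0 : 0 <= coef i w by apply: le_trans al; exact: ltW.
  rewrite [X in _ <= X]ger0_norm; last first.
    by rewrite !mulr_ge0 ?exprn_ge0 ?addr_ge0 // (le_trans coef_ge0 be).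
  rewrite /tested_flux /flux !normrM -mulrA ler_pM ?normr_ge0 //.
    by rewrite /tpow normrX lerXn2r ?nnegrE ?normr_ge0 ?norm_clamp_le_bound.
  rewrite ler_pM ?normr_ge0 ?(ger0_norm coef_ge0) //.
  by rewrite (le_trans (ler_normD _ _)) // lerD ?xi_bounds ?ler_normB.
have phie_int : P.-integrable setT (fun w => (phie i w)%:E).
  have := integrable_tau (ebase i) phi0_integrable.
  by apply: eq_integrable => // w _; rewrite phie_tau.
apply/integrable_finZ/integrable_finD; last exact: finite_measure_integrable_cst.
by apply/integrable_finD; apply/integrable_fin_norm.
Qed.

Lemma integrable_flux_defect M : 0 <= M ->
  P.-integrable setT (fun w => (flux_defect M w)%:E).
Proof.
move=> M0; apply: integrable_fin_sum => i.
by apply: integrable_finB; [|apply: integrable_tau]; exact: integrable_tested_flux.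
Qed.

Lemma integral_flux_defect M : 0 <= M -> (\int[P]_w (flux_defect M w)%:E = 0)%E.
Proof.
move=> M0; have tf := integrable_tested_flux _ M0.
have tfb i : P.-integrable setT (fun w => (tested_flux M i (back i w))%:E).
  exact: integrable_tau.
rewrite integral_fin_sum => [|i]; last exact: integrable_finB.
rewrite big1 // => i _; rewrite integral_finB //.
rewrite (@integral_tau _ (fun w => (tested_flux M i w)%:E)).
  by rewrite subee // integrable_fin_num.
exact/measurable_EFinP/measurable_tested_flux.
Qed.

Lemma energy_ge0 M w : 0 <= energy M w.
Proof. by rewrite sumr_ge0 // => i _; exact: trunc_energy_ge0. Qed.

Lemma energy_nondecreasing w : nondecreasing_seq (fun N : nat => (energy N.+1%:R w)%:E).
Proof.
move=> N N' NN'; rewrite lee_fin ler_sum // => i _.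
by rewrite le_trunc_energy // ler_nat.
Qed.

Lemma energy_cvg w : (fun N : nat => (energy N.+1%:R w)%:E) @ \oo --> (full_energy w)%:E.
Proof.
apply: cvg_near_cst.
pose B := `|phi0 w| + \sum_(i < d) `|phie i w|.
exists (Num.truncn B) => // N /= BN.
have {}BN : B <= N.+1%:R.
  by rewrite ltW // (lt_le_trans (truncnS_gt B)) // ler_nat.
congr EFin; apply: eq_bigr => i _; apply: trunc_energy_id => //.
  by apply: le_trans BN; rewrite lerDl sumr_ge0.
apply: le_trans BN; rewrite /B ler_wpDl //.
by rewrite (bigD1 i) //= lerDl sumr_ge0.
Qed.

(* The shift by [-e_i] turns [|phi(0)|^n |nabla^*_i phi(0)|^2]
   into [|phi(e_i)|^n |nabla_i phi(0)|^2]. *)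
Lemma gradient_moment_full_energy :
  (\int[P]_w ((`|phi w 0| ^+ n
          * (sqnorm_grad (phi w) 0 + sqnorm_grad_star (phi w) 0))%:E)
   = \int[P]_w (full_energy w)%:E)%E.
Proof.
pose fwd i w := `|phi0 w| ^+ n * (phie i w - phi0 w) ^+ 2.
pose bwd i w := `|phi0 w| ^+ n * (grad_star (phi w) 0 i) ^+ 2.
pose fwd' i w := `|phie i w| ^+ n * (phie i w - phi0 w) ^+ 2.
have mfwd i : measurable_fun setT (fwd i) by rewrite /fwd; measurability.
have mbwd i : measurable_fun setT (bwd i) by rewrite /bwd /grad_star; measurability.
have mfwd' i : measurable_fun setT (fwd' i) by rewrite /fwd'; measurability.
have fwd0 i w : 0 <= fwd i w by rewrite /fwd mulr_ge0 ?sqr_ge0 ?exprn_ge0 ?normr_ge0.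
have bwd0 i w : 0 <= bwd i w by rewrite /bwd mulr_ge0 ?sqr_ge0 ?exprn_ge0 ?normr_ge0.
have fwd'0 i w : 0 <= fwd' i w by rewrite /fwd' mulr_ge0 ?sqr_ge0 ?exprn_ge0 ?normr_ge0.
have bwd_back i w : bwd i w = fwd' i (back i w).
  by rewrite /bwd /fwd' phie_back /phi0 /back phi_tau /grad_star add0r.
have -> : (\int[P]_w (full_energy w)%:E
    = \int[P]_w (\sum_(i < d) (fwd i w + fwd' i w))%:E)%E.
  apply: eq_integral => w _; congr EFin; apply: eq_bigr => i _.
  by rewrite /fwd /fwd' !expr_even_norm // mulrDl.
rewrite (eq_integral (fun w => (\sum_(i < d) fwd i w + \sum_(i < d) bwd i w)%:E));
  last first.
  by move=> w _; rewrite mulrDr !mulr_sumr.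
rewrite ge0_integral_finD; last 4 first.
- exact: measurable_sum.
- exact: measurable_sum.
- by move=> w; rewrite sumr_ge0.
- by move=> w; rewrite sumr_ge0.
rewrite !ge0_integral_fin_sum //; last 2 first.
- by move=> i; exact: measurable_funD.
- by move=> i w; rewrite addr_ge0.
rewrite -big_split; apply: eq_bigr => i _.
rewrite ge0_integral_finD //; congr (_ + _)%E.
under eq_integral do rewrite bwd_back.
exact/integral_tau/measurable_EFinP.
Qed.

Section finite_moment.
Variable r : R.
Hypothesis moment_eq : (\int[P]_w (`|phi0 w| ^+ n)%:E = r%:E)%E.

Lemma integrable_moment0 : P.-integrable setT (fun w => (`|phi0 w| ^+ n)%:E).
Proof.
apply/integrableP; split; first by apply/measurable_EFinP; measurability.
rewrite (eq_integral (fun w => (`|phi0 w| ^+ n)%:E)) ?moment_eq ?ltry //.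
by move=> w _ /=; rewrite ger0_norm // exprn_ge0.
Qed.

Lemma integrable_momente i : P.-integrable setT (fun w => (`|phie i w| ^+ n)%:E).
Proof.
have := integrable_tau (ebase i) integrable_moment0.
by apply: eq_integrable => // w _; rewrite phie_tau.
Qed.

Lemma integral_momente i : (\int[P]_w (`|phie i w| ^+ n)%:E = r%:E)%E.
Proof.
under eq_integral do rewrite phie_tau.
rewrite (@integral_tau _ (fun w => (`|phi0 w| ^+ n)%:E)) ?moment_eq //.
by apply/measurable_EFinP; measurability.
Qed.

Lemma integrable_moment_sum : P.-integrable setT (fun w => (moment_sum w)%:E).
Proof.
apply: integrable_fin_sum => i; apply: integrable_finZ.
exact: integrable_finD integrable_moment0 (integrable_momente i).
Qed.

Lemma integral_moment_sum :
  (\int[P]_w (moment_sum w)%:E = (d%:R * (n.+1%:R * (r + r)))%:E)%E.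
Proof.
have ime := integrable_momente; have im0 := integrable_moment0.
have im i : P.-integrable setT (fun w => (`|phi0 w| ^+ n + `|phie i w| ^+ n)%:E).
  exact: integrable_finD.
rewrite integral_fin_sum => [|i]; last exact: integrable_finZ.
rewrite (eq_bigr (fun=> (n.+1%:R * (r + r))%:E)) => [|i _].
  by rewrite sumEFin big_const_ord iter_addr addr0 [in RHS]mulr_natl.
by rewrite integral_finZ // integral_finD // moment_eq integral_momente.
Qed.

Lemma integral_energy_le M : 0 <= M ->
  (\int[P]_w (energy M w)%:E <= (moment_const d n alpha beta * r)%:E)%E.
Proof.
move=> M0; have fd := integrable_flux_defect M0; have ms := integrable_moment_sum.
have bound w : energy M w <= alpha^-1 * (4 * flux_defect M w + 2 * beta * moment_sum w).
  by rewrite ler_pdivlMl // energy_le.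
apply: (@le_trans _ _ (\int[P]_w
    (alpha^-1 * (4 * flux_defect M w + 2 * beta * moment_sum w))%:E)%E).
  apply: ge0_le_integral => //.
  - by move=> w _; rewrite lee_fin energy_ge0.
  - exact/measurable_EFinP/measurable_energy.
  - apply/measurable_EFinP/measurable_funM/measurable_funD; first exact: measurable_cst.
      exact/measurable_funM/measurable_flux_defect/measurable_cst.
    exact/measurable_funM/measurable_moment_sum/measurable_cst.
  - by move=> w _; rewrite lee_fin bound.
rewrite integral_finZ; last exact/integrable_finD/integrable_finZ/ms/integrable_finZ.
rewrite integral_finD; try exact: integrable_finZ.
rewrite !integral_finZ // integral_flux_defect // integral_moment_sum.
rewrite mule0 add0e -!EFinM lee_fin.
by rewrite /moment_const le_eqVlt; apply/orP; left; apply/eqP; field; rewrite gt_eqF.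
Qed.

Lemma integral_full_energy_le :
  (\int[P]_w (full_energy w)%:E <= (moment_const d n alpha beta * r)%:E)%E.
Proof.
pose g (N : nat) w := (energy N.+1%:R w)%:E.
have gmeas N : measurable_fun setT (g N) by exact/measurable_EFinP/measurable_energy.
have g0 N w : (0 <= g N w)%E by rewrite lee_fin energy_ge0.
rewrite (eq_integral (fun w => limn (g^~ w))) => [|w _]; last first.
  by apply/esym/cvg_lim => //; exact: energy_cvg.
rewrite monotone_convergence // => [|w _]; last exact: energy_nondecreasing.
apply: lime_le; last by apply: nearW => N; exact: integral_energy_le.
apply: ereal_nondecreasing_is_cvgn => N N' NN'.
by apply: ge0_le_integral => // w _; exact: energy_nondecreasing.
Qed.

End finite_moment.

Lemma gradient_moment_le : (0 < d)%N -> alpha <= beta ->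
  (\int[P]_w ((`|phi w 0| ^+ n
                 * (sqnorm_grad (phi w) 0 + sqnorm_grad_star (phi w) 0))%:E)
     <= (moment_const d n alpha beta)%:E * \int[P]_w ((`|phi w 0| ^+ n)%:E))%E.
Proof.
move=> d0 albe; have C0 := moment_const_gt0 n d0 alpha_gt0 albe.
have I0 : (0 <= \int[P]_w ((`|phi w 0| ^+ n)%:E))%E.
  by apply: integral_ge0 => w _; rewrite lee_fin exprn_ge0.
have [Ioo|Ifin] := eqVneq (\int[P]_w ((`|phi w 0| ^+ n)%:E))%E +oo%E.
  by rewrite Ioo gt0_muley ?lte_fin // leey.
have Inum : (\int[P]_w ((`|phi w 0| ^+ n)%:E))%E \is a fin_num.
  by rewrite ge0_fin_numE // lt_neqAle Ifin leey.
rewrite gradient_moment_full_energy -(fineK Inum) -EFinM.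
by apply: integral_full_energy_le; rewrite fineK.
Qed.

End corrector_moment.

(* Only stationarity, ellipticity and the equation enter. *)
Theorem lemma2p7 (R : realType) (d : nat) (hd : (2 <= d)%N) (k : nat)
  (alpha beta : R) (halpha : 0 < alpha) (hab : alpha <= beta) :
  let n := (2 * k.+1)%N in
  exists C : R, 0 < C /\
  forall (dsp : measure_display) (Omega : measurableType dsp)
    (P : probability Omega R) (a : Omega -> Zd d -> Zd d -> R)
    (xi : 'rV[R]_d) (T : R) (phi : Omega -> Zd d -> R),
    (forall w, conductivity alpha beta (a w)) ->
    iid_conductivity P a ->
    \sum_(i < d) (xi 0 i) ^+ 2 = 1 ->
    0 < T ->
    approx_corrector P a xi T phi ->
    (\int[P]_w ((`|phi w 0| ^+ n
                 * (sqnorm_grad (phi w) 0 + sqnorm_grad_star (phi w) 0))%:E)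
     <= C%:E * \int[P]_w ((`|phi w 0| ^+ n)%:E))%E.
Proof.
move=> n; have n_even : ~~ odd n by rewrite oddM.
have d_gt0 : (0 < d)%N by exact: ltnW.
exists (moment_const d n alpha beta); split; first exact: moment_const_gt0.
move=> dsp Omega P a xi T phi cond [coef_meas _] xi1 T_gt0
  [phi_meas [[tau [tau_meas [tau_pres [a_tau phi_tau]]]] [phi_eq [phi0_int _]]]].
apply: (gradient_moment_le n_even halpha _ (fun i => coef_meas (0, i)) _ T_gt0
  phi_meas tau_meas tau_pres a_tau phi_tau phi_eq phi0_int d_gt0 hab).
- by move=> w i; exact: conductivity_ebase.
- by move=> i; exact: norm_coord_le1.
Qed.
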